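(* Let $\tau>0$, $\delta>0$ and $\kappa\in(0,1)$, and let $H':\mathbb{R}\to\mathbb{R}$ be the trilinear function $$H'(x)=\begin{cases} x+1 & x\le -\kappa,\\ -\frac{1-\kappa}{\kappa}\,x & -\kappa\le x\le \kappa,\\ x-1 & x\ge \kappa.\end{cases}$$ Consider the equation $$\tau\,\partial_t x(t,p)=\sigma(t)+\delta\,(p-\tfrac12)-H'\big(x(t,p)\big).\qquad (\ast)$$ Then $(\ast)$ admits two families of traveling wave solutions, left moving ($\Omega<0$) and right moving ($\Omega>0$), of the form $$x_{\mathrm{TW}}(t,p)=X(P),\qquad P=p-\Omega t,\qquad \sigma_{\mathrm{TW}}(t)=\Sigma-\delta\,(\Omega t-\tfrac12),$$ which are strictly increasing with respect to $p$. They are given as follows, for real numbers $\Xi_-<\Xi_+$. For $\Omega<0$: $X=X_L$ and $\Sigma=\Sigma_L$, where $$X_L(P)=\begin{cases}-\kappa+\delta(P-\Xi_-) & P\le \Xi_-,\\[2pt] -\kappa-\dfrac{\kappa\delta}{1-\kappa}(P-\Xi_-)-\dfrac{\kappa\tau\Omega\delta}{(1-\kappa)^2}\Big(\exp\Big(-\dfrac{1-\kappa}{\kappa\tau\Omega}(P-\Xi_-)\Big)-1\Big) & \Xi_-\le P\le \Xi_+,\\[2pt] \kappa+\delta(P-\Xi_+)+\big(2(1-\kappa)+\delta(\Xi_+-\Xi_-)\big)\Big(1-\exp\Big(\dfrac{P-\Xi_+}{\tau\Omega}\Big)\Big) & \Xi_+\le P,\end{cases}$$ $$\Sigma_L=1-\kappa-\tau\Omega\delta-\delta\,\Xi_-.$$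 For $\Omega>0$: $X=X_R$ and $\Sigma=\Sigma_R$, where $$X_R(P)=\begin{cases}-\kappa+\delta(P-\Xi_-)+\big(2(1-\kappa)+\delta(\Xi_+-\Xi_-)\big)\Big(-1+\exp\Big(\dfrac{P-\Xi_-}{\tau\Omega}\Big)\Big) & P\le \Xi_-,\\[2pt] \kappa-\dfrac{\kappa\delta}{1-\kappa}(P-\Xi_+)-\dfrac{\kappa\tau\Omega\delta}{(1-\kappa)^2}\Big(\exp\Big(-\dfrac{1-\kappa}{\kappa\tau\Omega}(P-\Xi_+)\Big)-1\Big) & \Xi_-\le P\le \Xi_+,\\[2pt] \kappa+\delta(P-\Xi_+) & \Xi_+\le P,\end{cases}$$ $$\Sigma_R=-1+\kappa-\tau\Omega\delta-\delta\,\Xi_+.$$ In both cases this holds provided that the transcendental equation $$\frac{2(1-\kappa)^2}{\tau|\Omega|\delta}+\frac{1-\kappa}{\tau|\Omega|}\,(\Xi_+-\Xi_-)=\exp\Big(\frac{1-\kappa}{\kappa\tau|\Omega|}(\Xi_+-\Xi_-)\Big)-1$$ is satisfied. In particular, the wave speed $\Omega$ can be regarded as the independent parameter: it determines the interface width $\Xi_+-\Xi_-$ but not the interface position $\tfrac12(\Xi_-+\Xi_+)$.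
   Context: The equation $(\ast)$ is considered here with the index variable $p$ ranging over $\mathbb{R}$ and the function $\sigma$ prescribed as stated; no integral (mean-field) constraint is imposed on the solution. The parameter $\tau>0$ is a relaxation time, $\delta>0$ is the strength of a linear disorder function $\theta(p)=\delta(p-\tfrac12)$, and $[-\kappa,\kappa]$ is the spinodal region of $H'$. For the traveling waves, $X(P)<-\kappa$ for $P<\Xi_-$, $X(P)\in(-\kappa,\kappa)$ for $\Xi_-<P<\Xi_+$, and $X(P)>\kappa$ for $P>\Xi_+$. *)

From Stdlib Require Import Reals.
From Coquelicot Require Import Coquelicot.
Open Scope R_scope.

Definition Hp (kappa x : R) : R :=
  if Rle_dec x (- kappa) then x + 1
  else if Rle_dec x kappa then - ((1 - kappa) / kappa) * x
  else x - 1.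

Definition XL (tau delta kappa Om Xm Xp P : R) : R :=
  if Rle_dec P Xm then - kappa + delta * (P - Xm)
  else if Rle_dec P Xp then
    - kappa - (kappa * delta / (1 - kappa)) * (P - Xm)
    - (kappa * tau * Om * delta / (1 - kappa) ^ 2)
      * (exp (- ((1 - kappa) / (kappa * tau * Om)) * (P - Xm)) - 1)
  else
    kappa + delta * (P - Xp)
    + (2 * (1 - kappa) + delta * (Xp - Xm)) * (1 - exp ((P - Xp) / (tau * Om))).

Definition SigmaL (tau delta kappa Om Xm : R) : R :=
  1 - kappa - tau * Om * delta - delta * Xm.

Definition XR (tau delta kappa Om Xm Xp P : R) : R :=
  if Rle_dec P Xm then
    - kappa + delta * (P - Xm)
    + (2 * (1 - kappa) + delta * (Xp - Xm)) * (-1 + exp ((P - Xm) / (tau * Om)))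
  else if Rle_dec P Xp then
    kappa - (kappa * delta / (1 - kappa)) * (P - Xp)
    - (kappa * tau * Om * delta / (1 - kappa) ^ 2)
      * (exp (- ((1 - kappa) / (kappa * tau * Om)) * (P - Xp)) - 1)
  else kappa + delta * (P - Xp).

Definition SigmaR (tau delta kappa Om Xp : R) : R :=
  -1 + kappa - tau * Om * delta - delta * Xp.

(* The transcendental equation, with w = Xi_+ - Xi_- the interface width. *)
Definition TWeq (tau delta kappa Om w : R) : Prop :=
  2 * (1 - kappa) ^ 2 / (tau * Rabs Om * delta) + (1 - kappa) / (tau * Rabs Om) * w
  = exp ((1 - kappa) / (kappa * tau * Rabs Om) * w) - 1.

Definition solves (tau delta kappa : R) (sigma : R -> R) (x : R -> R -> R) : Prop :=
  forall t p : R,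
    ex_derive (fun s => x s p) t /\
    tau * Derive (fun s => x s p) t
    = sigma t + delta * (p - 1 / 2) - Hp kappa (x t p).

Definition TW_props (tau delta kappa Om Xm Xp Sigma : R) (X : R -> R) : Prop :=
  solves tau delta kappa (fun t => Sigma - delta * (Om * t - 1 / 2))
         (fun t p => X (p - Om * t)) /\
  (forall t p1 p2, p1 < p2 -> X (p1 - Om * t) < X (p2 - Om * t)) /\
  (forall P, P < Xm -> X P < - kappa) /\
  (forall P, Xm < P < Xp -> - kappa < X P < kappa) /\
  (forall P, Xp < P -> kappa < X P).

From Stdlib Require Import Reals Lra.
From Coquelicot Require Import Coquelicot.
Open Scope R_scope.

(* For a wave X (p - Om t), the evolution equation becomes the profile equation
   -tau Om X'(P) = Sigma + delta P - H'(X P), which is linear on each phase of H'.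
   The three branches of X_L and X_R solve these linear equations, take the value
   -kappa at Xi_- and kappa at Xi_+ (for the middle branch this is exactly the
   transcendental equation), and since H' is continuous the profile equation then
   forces the one-sided slopes to agree, so X is differentiable.  Every branch has
   positive slope, so X is strictly increasing and each branch stays in the phase
   whose equation it solves.  For the width, exp (k w) - 1 - A - B w with B < k
   increases on [0, +oo) from -A < 0 to +oo, so it has exactly one positive root. *)

(* XL and XR are convertible to [glue Xm g1 (glue Xp g2 g3)] for their three branches. *)
Definition glue (a : R) (g h : R -> R) (x : R) : R :=
  if Rle_dec x a then g x else h x.

Lemma is_derive_glue_at (g h : R -> R) (a l : R) :
  is_derive g a l -> is_derive h a l -> g a = h a -> is_derive (glue a g h) a l.
Proof.
  intros Hg Hh Hgh.
  apply is_derive_Reals in Hg; apply is_derive_Reals in Hh; apply is_derive_Reals.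
  intros eps Heps.
  destruct (Hg eps Heps) as [dg Hdg]; destruct (Hh eps Heps) as [dh Hdh].
  exists (mkposreal _ (Rmin_pos _ _ (cond_pos dg) (cond_pos dh))); simpl.
  intros u Hu0 Hu; unfold glue.
  destruct (Rle_dec a a) as [_|]; [|lra].
  destruct (Rle_dec (a + u) a).
  - apply Hdg; [exact Hu0|]. apply (Rlt_le_trans _ _ _ Hu), Rmin_l.
  - rewrite Hgh. apply Hdh; [exact Hu0|]. apply (Rlt_le_trans _ _ _ Hu), Rmin_r.
Qed.

Lemma is_derive_glue (g h dg dh : R -> R) (a : R) :
  (forall x, is_derive g x (dg x)) -> (forall x, is_derive h x (dh x)) ->
  g a = h a -> dg a = dh a ->
  forall x, is_derive (glue a g h) x (glue a dg dh x).
Proof.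
  intros Hg Hh Hgh Hd x; unfold glue at 2.
  destruct (total_order_T x a) as [[Hx|<-]|Hx].
  - destruct (Rle_dec x a) as [_|]; [|lra].
    apply (is_derive_ext_loc g); [|apply Hg].
    apply (filter_imp (fun t => t < a)); [|exact (open_lt _ _ Hx)].
    intros t Ht; unfold glue; destruct (Rle_dec t a); [reflexivity|lra].
  - destruct (Rle_dec x x) as [_|]; [|lra].
    apply is_derive_glue_at; [apply Hg| rewrite Hd; apply Hh | exact Hgh].
  - destruct (Rle_dec x a) as [|_]; [lra|].
    apply (is_derive_ext_loc h); [|apply Hh].
    apply (filter_imp (fun t => a < t)); [|exact (open_gt _ _ Hx)].
    intros t Ht; unfold glue; destruct (Rle_dec t a); [lra|reflexivity].
Qed.

Lemma strictly_increasing_of_derive_pos (f df : R -> R) :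
  (forall x, is_derive f x (df x)) -> (forall x, 0 < df x) ->
  forall x y, x < y -> f x < f y.
Proof.
  intros Hf Hdf x y Hxy.
  apply (incr_function f m_infty p_infty df); simpl; auto.
  intros t _ _; apply Rlt_gt, Hdf.
Qed.

Lemma Hp_stable_left (kappa x : R) : x <= - kappa -> Hp kappa x = x + 1.
Proof. intro Hx; unfold Hp; destruct (Rle_dec x (- kappa)); [reflexivity|contradiction]. Qed.

Lemma Hp_spinodal (kappa x : R) :
  0 < kappa -> - kappa <= x <= kappa -> Hp kappa x = - ((1 - kappa) / kappa) * x.
Proof.
  intros Hk Hx; unfold Hp; destruct (Rle_dec x (- kappa)).
  - replace x with (- kappa) by lra; field; lra.
  - destruct (Rle_dec x kappa); [reflexivity|lra].
Qed.

Lemma Hp_stable_right (kappa x : R) : 0 < kappa -> kappa <= x -> Hp kappa x = x - 1.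
Proof.
  intros Hk Hx; unfold Hp; destruct (Rle_dec x (- kappa)); [lra|].
  destruct (Rle_dec x kappa); [|reflexivity].
  replace x with kappa by lra; field; lra.
Qed.

Lemma solves_traveling_wave (tau delta kappa Om Sig : R) (X D : R -> R) :
  (forall P, is_derive X P (D P)) ->
  (forall P, - (tau * Om * D P) = Sig + delta * P - Hp kappa (X P)) ->
  solves tau delta kappa (fun t => Sig - delta * (Om * t - 1 / 2))
         (fun t p => X (p - Om * t)).
Proof.
  intros HX Hode t p.
  assert (Hwave : is_derive (fun s => X (p - Om * s)) t (- Om * D (p - Om * t))).
  { apply (is_derive_comp X (fun s => p - Om * s)); [apply HX|].
    auto_derive; [exact I|ring]. }
  split; [eexists; exact Hwave|].
  replace (Derive (fun s => X (p - Om * s)) t) with (- Om * D (p - Om * t))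
    by (symmetry; now apply is_derive_unique).
  replace (tau * (- Om * D (p - Om * t))) with (- (tau * Om * D (p - Om * t))) by ring.
  rewrite Hode; ring.
Qed.

Section GluedProfile.

Variables tau delta kappa Om Sig Xm Xp : R.
Variables g1 g2 g3 d1 d2 d3 : R -> R.

Hypothesis kappa_pos : 0 < kappa.
Hypothesis tau_Om_neq0 : tau * Om <> 0.
Hypothesis Xm_lt_Xp : Xm < Xp.

Hypothesis derive_g1 : forall P, is_derive g1 P (d1 P).
Hypothesis derive_g2 : forall P, is_derive g2 P (d2 P).
Hypothesis derive_g3 : forall P, is_derive g3 P (d3 P).

Hypothesis g1_Xm : g1 Xm = - kappa.
Hypothesis g2_Xm : g2 Xm = - kappa.
Hypothesis g2_Xp : g2 Xp = kappa.
Hypothesis g3_Xp : g3 Xp = kappa.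

Hypothesis ode_g1 : forall P, - (tau * Om * d1 P) = Sig + delta * P - (g1 P + 1).
Hypothesis ode_g2 :
  forall P, - (tau * Om * d2 P) = Sig + delta * P + (1 - kappa) / kappa * g2 P.
Hypothesis ode_g3 : forall P, - (tau * Om * d3 P) = Sig + delta * P - (g3 P - 1).

Hypothesis d1_pos : forall P, P <= Xm -> 0 < d1 P.
Hypothesis d2_pos : forall P, Xm <= P <= Xp -> 0 < d2 P.
Hypothesis d3_pos : forall P, Xp <= P -> 0 < d3 P.

Local Notation X := (glue Xm g1 (glue Xp g2 g3)).
Local Notation D := (glue Xm d1 (glue Xp d2 d3)).

(* H' is continuous at -kappa and kappa, so the branch equations force equal slopes. *)
Lemma d1_Xm_eq_d2_Xm : d1 Xm = d2 Xm.
Proof.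
  apply (Rmult_eq_reg_l (tau * Om)); [|exact tau_Om_neq0].
  apply Ropp_eq_reg; rewrite ode_g1, ode_g2, g1_Xm, g2_Xm; field; lra.
Qed.

Lemma d2_Xp_eq_d3_Xp : d2 Xp = d3 Xp.
Proof.
  apply (Rmult_eq_reg_l (tau * Om)); [|exact tau_Om_neq0].
  apply Ropp_eq_reg; rewrite ode_g2, ode_g3, g2_Xp, g3_Xp; field; lra.
Qed.

Lemma is_derive_profile P : is_derive X P (D P).
Proof.
  apply is_derive_glue; [exact derive_g1| | |].
  - apply is_derive_glue; auto using d2_Xp_eq_d3_Xp; congruence.
  - unfold glue; destruct (Rle_dec Xm Xp); [congruence|lra].
  - unfold glue; destruct (Rle_dec Xm Xp); [exact d1_Xm_eq_d2_Xm|lra].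
Qed.

Lemma profile_increasing P Q : P < Q -> X P < X Q.
Proof.
  apply (strictly_increasing_of_derive_pos _ (fun P => D P)); [exact is_derive_profile|].
  intro x; unfold glue.
  destruct (Rle_dec x Xm); [apply d1_pos; lra|].
  destruct (Rle_dec x Xp); [apply d2_pos|apply d3_pos]; lra.
Qed.

Lemma profile_Xm : X Xm = - kappa.
Proof. unfold glue; destruct (Rle_dec Xm Xm); [exact g1_Xm|lra]. Qed.

Lemma profile_Xp : X Xp = kappa.
Proof.
  unfold glue; destruct (Rle_dec Xp Xm); [lra|].
  destruct (Rle_dec Xp Xp); [exact g2_Xp|lra].
Qed.

Lemma profile_le P Q : P <= Q -> X P <= X Q.
Proof. intros [HPQ| ->]; [left; now apply profile_increasing|now right]. Qed.

Lemma profile_ode P : - (tau * Om * D P) = Sig + delta * P - Hp kappa (X P).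
Proof.
  destruct (Rle_dec P Xm) as [HPm|HPm]; [|destruct (Rle_dec P Xp) as [HPp|HPp]].
  - assert (HX : X P <= - kappa) by (rewrite <- profile_Xm; now apply profile_le).
    rewrite (Hp_stable_left _ _ HX); unfold glue.
    destruct (Rle_dec P Xm); [apply ode_g1|contradiction].
  - assert (HX : - kappa <= X P <= kappa)
      by (rewrite <- profile_Xm, <- profile_Xp; split; apply profile_le; lra).
    rewrite (Hp_spinodal _ _ kappa_pos HX); unfold glue.
    destruct (Rle_dec P Xm); [contradiction|].
    destruct (Rle_dec P Xp); [|contradiction].
    rewrite ode_g2; ring.
  - assert (HX : kappa <= X P) by (rewrite <- profile_Xp; apply profile_le; lra).
    rewrite (Hp_stable_right _ _ kappa_pos HX); unfold glue.
    destruct (Rle_dec P Xm); [contradiction|].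
    destruct (Rle_dec P Xp); [contradiction|apply ode_g3].
Qed.

Lemma glued_profile_TW_props : TW_props tau delta kappa Om Xm Xp Sig X.
Proof.
  split; [|split; [|split; [|split]]].
  - exact (solves_traveling_wave _ _ _ _ _ _ _ is_derive_profile profile_ode).
  - intros t p1 p2 Hp12; apply profile_increasing; lra.
  - intros P HP; rewrite <- profile_Xm; now apply profile_increasing.
  - intros P HP; rewrite <- profile_Xm, <- profile_Xp; split; apply profile_increasing; lra.
  - intros P HP; rewrite <- profile_Xp; now apply profile_increasing.
Qed.

End GluedProfile.

Lemma XL_TW_props (tau delta kappa Om Xm Xp : R) :
  0 < tau -> 0 < delta -> 0 < kappa < 1 -> Om < 0 -> Xm < Xp ->
  TWeq tau delta kappa Om (Xp - Xm) ->
  TW_props tau delta kappa Om Xm Xp (SigmaL tau delta kappa Om Xm)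
           (XL tau delta kappa Om Xm Xp).
Proof.
  intros Htau Hdelta Hkappa HOm HXm HT.
  set (C := 2 * (1 - kappa) + delta * (Xp - Xm)).
  set (a := (1 - kappa) / (kappa * tau * Om)).
  assert (HC : 0 < C) by (unfold C; nra).
  assert (HtO : tau * Om < 0) by nra.
  assert (Ha : a < 0) by (apply Rdiv_pos_neg; nra).
  apply glued_profile_TW_props with
    (g1 := fun P => - kappa + delta * (P - Xm))
    (g2 := fun P => - kappa - (kappa * delta / (1 - kappa)) * (P - Xm)
      - (kappa * tau * Om * delta / (1 - kappa) ^ 2) * (exp (- a * (P - Xm)) - 1))
    (g3 := fun P => kappa + delta * (P - Xp) + C * (1 - exp ((P - Xp) / (tau * Om))))
    (d1 := fun P => delta)
    (d2 := fun P => delta / (1 - kappa) * (exp (- a * (P - Xm)) - kappa))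
    (d3 := fun P => delta - C / (tau * Om) * exp ((P - Xp) / (tau * Om))); cbv beta.
  1-3: lra.
  - intro P; auto_derive; [exact I|ring].
  - intro P; auto_derive; [exact I|]. unfold Rminus, a; field; lra.
  - intro P; auto_derive; [exact I|]. unfold Rminus, Rdiv; field; lra.
  - ring.
  - replace (Xm - Xm) with 0 by ring. rewrite !Rmult_0_r, exp_0. ring.
  - unfold TWeq in HT; rewrite Rabs_left in HT by exact HOm.
    replace (- a * (Xp - Xm)) with ((1 - kappa) / (kappa * tau * - Om) * (Xp - Xm))
      by (unfold a; field; lra).
    rewrite <- HT; field; lra.
  - replace ((Xp - Xp) / (tau * Om)) with 0 by (field; lra). rewrite exp_0. ring.
  - intro P; unfold SigmaL. ring.
  - intro P; unfold SigmaL, a. field. lra.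
  - intro P; unfold SigmaL, C. field. lra.
  - intros P _; exact Hdelta.
  - intros P HP.
    pose proof (exp_ineq1_le (- a * (P - Xm))).
    apply Rmult_lt_0_compat; [apply Rdiv_lt_0_compat|]; nra.
  - intros P _.
    pose proof (exp_pos ((P - Xp) / (tau * Om))).
    assert (C / (tau * Om) < 0) by (apply Rdiv_pos_neg; lra). nra.
Qed.

Lemma XR_TW_props (tau delta kappa Om Xm Xp : R) :
  0 < tau -> 0 < delta -> 0 < kappa < 1 -> 0 < Om -> Xm < Xp ->
  TWeq tau delta kappa Om (Xp - Xm) ->
  TW_props tau delta kappa Om Xm Xp (SigmaR tau delta kappa Om Xp)
           (XR tau delta kappa Om Xm Xp).
Proof.
  intros Htau Hdelta Hkappa HOm HXm HT.
  set (C := 2 * (1 - kappa) + delta * (Xp - Xm)).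
  set (a := (1 - kappa) / (kappa * tau * Om)).
  assert (HC : 0 < C) by (unfold C; nra).
  assert (HtO : 0 < tau * Om) by nra.
  assert (Ha : 0 < a) by (apply Rdiv_lt_0_compat; nra).
  apply glued_profile_TW_props with
    (g1 := fun P => - kappa + delta * (P - Xm) + C * (-1 + exp ((P - Xm) / (tau * Om))))
    (g2 := fun P => kappa - (kappa * delta / (1 - kappa)) * (P - Xp)
      - (kappa * tau * Om * delta / (1 - kappa) ^ 2) * (exp (- a * (P - Xp)) - 1))
    (g3 := fun P => kappa + delta * (P - Xp))
    (d1 := fun P => delta + C / (tau * Om) * exp ((P - Xm) / (tau * Om)))
    (d2 := fun P => delta / (1 - kappa) * (exp (- a * (P - Xp)) - kappa))
    (d3 := fun P => delta); cbv beta.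
  1-3: lra.
  - intro P; auto_derive; [exact I|]. unfold Rminus, Rdiv; field; lra.
  - intro P; auto_derive; [exact I|]. unfold Rminus, a; field; lra.
  - intro P; auto_derive; [exact I|ring].
  - replace ((Xm - Xm) / (tau * Om)) with 0 by (field; lra). rewrite exp_0. ring.
  - unfold TWeq in HT; rewrite Rabs_right in HT by lra.
    replace (- a * (Xm - Xp)) with ((1 - kappa) / (kappa * tau * Om) * (Xp - Xm))
      by (unfold a; field; lra).
    rewrite <- HT; field; lra.
  - replace (Xp - Xp) with 0 by ring. rewrite !Rmult_0_r, exp_0. ring.
  - ring.
  - intro P; unfold SigmaR, C. field. lra.
  - intro P; unfold SigmaR, a. field. lra.
  - intro P; unfold SigmaR. ring.
  - intros P _.
    pose proof (exp_pos ((P - Xm) / (tau * Om))).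
    assert (0 < C / (tau * Om)) by (apply Rdiv_lt_0_compat; lra). nra.
  - intros P HP.
    pose proof (exp_ineq1_le (- a * (P - Xp))).
    apply Rmult_lt_0_compat; [apply Rdiv_lt_0_compat|]; nra.
  - intros P _; exact Hdelta.
Qed.

Lemma exp_eq_affine_unique_pos_root (A B k : R) :
  0 < A -> B < k -> exists! w, 0 < w /\ A + B * w = exp (k * w) - 1.
Proof.
  intros HA HBk.
  set (f := fun w => exp (k * w) - 1 - A - B * w).
  assert (Hf : forall w, is_derive f w (k * exp (k * w) - B)).
  { intro w; unfold f; auto_derive; [exact I|ring]. }
  assert (f_incr : forall u v, 0 <= u -> u < v -> f u < f v).
  { intros u v Hu Huv.
    apply (incr_function_le f 0 p_infty (fun w => k * exp (k * w) - B)); simpl; auto.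
    intros w Hw _; apply Rlt_gt.
    destruct (Rle_lt_dec 0 k) as [Hk|Hk].
    - pose proof (exp_ineq1_le (k * w)); nra.
    - assert (Hexp : exp (k * w) <= exp 0).
      { destruct Hw as [Hw| <-]; [left; apply exp_increasing; nra|right; f_equal; ring]. }
      rewrite exp_0 in Hexp; pose proof (exp_pos (k * w)); nra. }
  set (W := A / (k - B) + 1).
  assert (HW : 0 < W).
  { assert (0 < A / (k - B)) by (apply Rdiv_lt_0_compat; lra). unfold W; lra. }
  assert (f0 : f 0 < 0) by (unfold f; rewrite Rmult_0_r, exp_0; lra).
  assert (fW : 0 < f W).
  { unfold f. pose proof (exp_ineq1_le (k * W)).
    assert ((k - B) * W = A + (k - B)) by (unfold W; field; lra). nra. }
  assert (f_cont : continuity f).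
  { intro w; apply continuity_pt_filterlim, (ex_derive_continuous f).
    eexists; apply Hf. }
  destruct (IVT f 0 W f_cont HW f0 fW) as [z [Hz fz]].
  assert (z <> 0) by (intros ->; lra).
  exists z; split; [unfold f in fz; split; lra|].
  intros w [Hw Tw].
  assert (fw : f w = 0) by (unfold f; lra).
  destruct (total_order_T z w) as [[Hzw| ->]|Hwz]; [|reflexivity|].
  - pose proof (f_incr z w ltac:(lra) Hzw); lra.
  - pose proof (f_incr w z ltac:(lra) Hwz); lra.
Qed.

Lemma TWeq_unique_width (tau delta kappa Om : R) :
  0 < tau -> 0 < delta -> 0 < kappa < 1 -> Om <> 0 ->
  exists! w, 0 < w /\ TWeq tau delta kappa Om w.
Proof.
  intros Htau Hdelta Hkappa HOm.
  pose proof (Rabs_pos_lt Om HOm) as Hm.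
  assert (Htm : 0 < tau * Rabs Om) by nra.
  set (B := (1 - kappa) / (tau * Rabs Om)).
  assert (HB : 0 < B) by (apply Rdiv_lt_0_compat; lra).
  apply exp_eq_affine_unique_pos_root; [apply Rdiv_lt_0_compat; nra|].
  replace ((1 - kappa) / (kappa * tau * Rabs Om)) with (B / kappa) by (unfold B; field; lra).
  change (B < B / kappa).
  assert (B / kappa - B = B * (1 - kappa) / kappa) by (field; lra).
  assert (0 < B * (1 - kappa) / kappa) by (apply Rdiv_lt_0_compat; nra).
  lra.
Qed.

Theorem theorem2p1 :
  forall tau delta kappa : R,
    0 < tau -> 0 < delta -> 0 < kappa < 1 ->
    (forall Om Xm Xp : R, Om < 0 -> Xm < Xp -> TWeq tau delta kappa Om (Xp - Xm) ->
       TW_props tau delta kappa Om Xm Xp (SigmaL tau delta kappa Om Xm)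
                (XL tau delta kappa Om Xm Xp)) /\
    (forall Om Xm Xp : R, 0 < Om -> Xm < Xp -> TWeq tau delta kappa Om (Xp - Xm) ->
       TW_props tau delta kappa Om Xm Xp (SigmaR tau delta kappa Om Xp)
                (XR tau delta kappa Om Xm Xp)) /\
    (forall Om : R, Om <> 0 -> exists! w : R, 0 < w /\ TWeq tau delta kappa Om w).
Proof.
  intros tau delta kappa Htau Hdelta Hkappa.
  split; [|split].
  - intros Om Xm Xp; now apply XL_TW_props.
  - intros Om Xm Xp; now apply XR_TW_props.
  - intros Om; now apply TWeq_unique_width.
Qed.
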